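(* Let $M$ be a residually finite monoid. Then for every $\mathcal{H}$-class $H$ of $M$, the Schützenberger group $\Gamma(H)$ is residually finite.
   Context: A monoid (or group) $M$ is residually finite if for any two distinct $x,y\in M$ there is a finite monoid $N$ and a homomorphism $f:M\to N$ with $f(x)\neq f(y)$. Green's relations on $M$: $x\mathcal{R}y$ iff $xM=yM$; $x\mathcal{L}y$ iff $Mx=My$; $\mathcal{H}=\mathcal{R}\cap\mathcal{L}$. For an $\mathcal{H}$-class $H$ of $M$, let $\mathrm{Stab}(H)=\{s\in M: Hs=H\}$ (a submonoid acting on $H$ by right multiplication), let $\sigma$ be the kernel of this action, i.e. $(x,y)\in\sigma$ iff $hx=hy$ for all $h\in H$; the Schützenberger group of $H$ is the group $\Gamma(H)=\mathrm{Stab}(H)/\sigma$. *)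

From Stdlib Require Import List ClassicalEpsilon FunctionalExtensionality
  PropExtensionality ProofIrrelevance.

Record Monoid : Type := {
  mcar :> Type;
  mop : mcar -> mcar -> mcar;
  mone : mcar;
  massoc : forall x y z, mop x (mop y z) = mop (mop x y) z;
  mone_l : forall x, mop mone x = x;
  mone_r : forall x, mop x mone = x
}.
Arguments mop {m} _ _.
Arguments mone {m}.

Definition finite_monoid (N : Monoid) : Prop :=
  exists l : list N, forall x : N, In x l.

Definition is_monoid_hom {M N : Monoid} (f : M -> N) : Prop :=
  (forall x y : M, f (mop x y) = mop (f x) (f y)) /\ f mone = mone.

Definition residually_finite (M : Monoid) : Prop :=
  forall x y : M, x <> y ->
    exists (N : Monoid) (f : M -> N),
      finite_monoid N /\ is_monoid_hom f /\ f x <> f y.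

(* Green's relations: x R y iff xM = yM; x L y iff Mx = My; H = R /\ L. *)
Definition green_R {M : Monoid} (x y : M) : Prop :=
  exists a b : M, x = mop y a /\ y = mop x b.
Definition green_L {M : Monoid} (x y : M) : Prop :=
  exists a b : M, x = mop a y /\ y = mop b x.
Definition green_H {M : Monoid} (x y : M) : Prop := green_R x y /\ green_L x y.

Definition is_H_class {M : Monoid} (H : M -> Prop) : Prop :=
  exists x : M, forall y : M, H y <-> green_H x y.

Section Schutzenberger.
Variables (M : Monoid) (H : M -> Prop).

(* Stab(H) = { s | H s = H } *)
Definition stab (s : M) : Prop :=
  (forall h, H h -> H (mop h s)) /\
  (forall h', H h' -> exists h, H h /\ h' = mop h s).

Definition sigma (x y : M) : Prop := forall h, H h -> mop h x = mop h y.

Definition cls (s : M) : M -> Prop := fun t => stab t /\ sigma s t.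

Definition Gcar : Type := { P : M -> Prop | exists s, stab s /\ P = cls s }.

Lemma stab_one : stab mone.
Proof.
  split.
  - intros h Hh. rewrite mone_r. exact Hh.
  - intros h' Hh'. exists h'. rewrite mone_r. auto.
Qed.

Lemma stab_mul a b : stab a -> stab b -> stab (mop a b).
Proof.
  intros [Ha1 Ha2] [Hb1 Hb2]; split.
  - intros h Hh. rewrite massoc. auto.
  - intros h' Hh'. destruct (Hb2 h' Hh') as [k [Hk ->]].
    destruct (Ha2 k Hk) as [j [Hj ->]]. exists j. split; auto.
    rewrite massoc; reflexivity.
Qed.

Definition rep (P : Gcar) : M :=
  proj1_sig (constructive_indefinite_description _ (proj2_sig P)).

Lemma rep_spec P : stab (rep P) /\ proj1_sig P = cls (rep P).
Proof.
  unfold rep. destruct (constructive_indefinite_description _ _); auto.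
Qed.

Lemma sigma_refl x : sigma x x.
Proof. intros h _; reflexivity. Qed.
Lemma sigma_sym x y : sigma x y -> sigma y x.
Proof. intros E h Hh; symmetry; auto. Qed.
Lemma sigma_trans x y z : sigma x y -> sigma y z -> sigma x z.
Proof. intros E F h Hh; rewrite E, F; auto. Qed.

Lemma sigma_mul a a' b b' : stab a -> sigma a a' -> sigma b b' ->
  sigma (mop a b) (mop a' b').
Proof.
  intros [Sa _] E F h Hh. rewrite !massoc.
  rewrite (F _ (Sa h Hh)). rewrite (E h Hh). reflexivity.
Qed.

Lemma cls_eq a b : sigma a b -> cls a = cls b.
Proof.
  intros E. apply functional_extensionality; intro t.
  apply propositional_extensionality; unfold cls; split; intros [St Et]; split; auto.
  - eapply sigma_trans; [apply sigma_sym; exact E| exact Et].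
  - eapply sigma_trans; [exact E| exact Et].
Qed.

Lemma Gcar_eq (P Q : Gcar) : proj1_sig P = proj1_sig Q -> P = Q.
Proof.
  destruct P as [p hp], Q as [q hq]; simpl; intros ->.
  f_equal; apply proof_irrelevance.
Qed.

Definition mkG (s : M) (Hs : stab s) : Gcar :=
  exist _ (cls s) (ex_intro _ s (conj Hs eq_refl)).

Lemma rep_mkG s Hs : sigma s (rep (mkG s Hs)).
Proof.
  destruct (rep_spec (mkG s Hs)) as [S E]. simpl in E.
  assert (Hin : cls (rep (mkG s Hs)) (rep (mkG s Hs))) by (split; auto using sigma_refl).
  rewrite <- E in Hin. destruct Hin; auto.
Qed.

Definition Gmul (P Q : Gcar) : Gcar :=
  mkG (mop (rep P) (rep Q))
      (stab_mul _ _ (proj1 (rep_spec P)) (proj1 (rep_spec Q))).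

Definition Gone : Gcar := mkG mone stab_one.

Lemma G_rep_eq (P : Gcar) : P = mkG (rep P) (proj1 (rep_spec P)).
Proof. apply Gcar_eq. simpl. apply (proj2 (rep_spec P)). Qed.

Lemma Gassoc P Q R : Gmul P (Gmul Q R) = Gmul (Gmul P Q) R.
Proof.
  apply Gcar_eq; simpl. apply cls_eq.
  destruct (rep_spec P) as [SP _]; destruct (rep_spec Q) as [SQ _].
  set (qr := Gmul Q R). set (pq := Gmul P Q).
  assert (E2 : sigma (mop (rep Q) (rep R)) (rep qr)) by apply rep_mkG.
  assert (E3 : sigma (mop (rep P) (rep Q)) (rep pq)) by apply rep_mkG.
  eapply sigma_trans.
  - apply sigma_mul; [exact SP | apply sigma_refl | apply sigma_sym; exact E2].
  - rewrite massoc. apply sigma_mul; [apply stab_mul; auto | exact E3 | apply sigma_refl].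
Qed.

Lemma Gone_l P : Gmul Gone P = P.
Proof.
  rewrite (G_rep_eq P) at 2. apply Gcar_eq; simpl. apply cls_eq.
  eapply sigma_trans.
  - apply sigma_mul; [apply (proj1 (rep_spec Gone)) |
      apply sigma_sym, rep_mkG | apply sigma_refl].
  - rewrite mone_l; apply sigma_refl.
Qed.

Lemma Gone_r P : Gmul P Gone = P.
Proof.
  rewrite (G_rep_eq P) at 2. apply Gcar_eq; simpl. apply cls_eq.
  eapply sigma_trans.
  - apply sigma_mul; [apply (proj1 (rep_spec P)) | apply sigma_refl |
      apply sigma_sym, rep_mkG].
  - rewrite mone_r; apply sigma_refl.
Qed.

(* The Schützenberger group Gamma(H) = Stab(H) / sigma, as a monoid. *)
Definition schutzenberger_group : Monoid :=
  {| mcar := Gcar; mop := Gmul; mone := Gone;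
     massoc := Gassoc; mone_l := Gone_l; mone_r := Gone_r |}.

End Schutzenberger.

(* A separating homomorphism f : M -> N into a finite monoid turns the right
   action of Stab(H) on H into an action of Gamma(H) on the finite set f(H)
   (extended by the identity off f(H)), i.e. a homomorphism into the finite
   monoid of self-maps of N.  If P <> Q in Gamma(H), their representatives act
   differently on some h in H, and choosing f to separate h*p from h*q makes
   the images of P and Q differ at f h.  Nothing about H beyond being a set of
   elements of M is used, so the hypothesis that H is an H-class is idle. *)
From Stdlib Require Import List Classical ClassicalEpsilon FunctionalExtensionality.

Lemma functions_finite_on_list {A B : Type} (la : list A) (lb : list B) (b0 : B) :
  (forall y, In y lb) ->
  exists L : list (A -> B),
    forall g, exists k, In k L /\ forall x, In x la -> k x = g x.
Proof.
  intros hb; induction la as [|a la [L HL]].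
  - exists ((fun _ => b0) :: nil); intros g.
    exists (fun _ => b0); split; [left; reflexivity | intros x []].
  - exists (flat_map (fun k => map (fun b x =>
      if excluded_middle_informative (x = a) then b else k x) lb) L).
    intros g; destruct (HL g) as [k [Hk Hkg]].
    exists (fun x => if excluded_middle_informative (x = a) then g a else k x).
    split.
    + apply in_flat_map; exists k; split; [exact Hk |].
      apply in_map_iff; exists (g a); auto.
    + intros x Hx; destruct (excluded_middle_informative (x = a)) as [->|ne];
        [reflexivity |].
      destruct Hx as [->|Hx]; [congruence | auto].
Qed.

(* Composition is written left to right, so that it is a right action. *)
Definition transformation_monoid (N : Monoid) : Monoid :=
  {| mcar := N -> N; mop := fun g k x => k (g x); mone := fun x => x;
     massoc := fun _ _ _ => eq_refl; mone_l := fun _ => eq_refl;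
     mone_r := fun _ => eq_refl |}.

Lemma finite_transformation_monoid (N : Monoid) :
  finite_monoid N -> finite_monoid (transformation_monoid N).
Proof.
  intros [l hl]; destruct (functions_finite_on_list l l (@mone N) hl) as [L HL].
  exists L; intros g; destruct (HL g) as [k [Hk Hkg]].
  replace g with k; [exact Hk |].
  apply functional_extensionality; auto.
Qed.

Section SchutzenbergerRepresentatives.
Variables (M : Monoid) (H : M -> Prop).

Lemma rep_Gmul (P Q : Gcar M H) :
  sigma M H (mop (rep M H P) (rep M H Q)) (rep M H (Gmul M H P Q)).
Proof. apply rep_mkG. Qed.

Lemma rep_Gone : sigma M H mone (rep M H (Gone M H)).
Proof. apply rep_mkG. Qed.

Lemma rep_separates (P Q : Gcar M H) :
  P <> Q -> exists h, H h /\ mop h (rep M H P) <> mop h (rep M H Q).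
Proof.
  intros PQ; apply NNPP; intros no_h; apply PQ.
  rewrite (G_rep_eq M H P), (G_rep_eq M H Q); apply Gcar_eq, cls_eq; simpl.
  intros h Hh; apply NNPP; intros ne; apply no_h; eauto.
Qed.

Section ImageAction.
Variables (N : Monoid) (f : M -> N).
Hypothesis f_hom : is_monoid_hom f.

Definition in_image (x : N) : Prop := exists h, H h /\ x = f h.

Definition image_action (P : Gcar M H) (x : N) : N :=
  if excluded_middle_informative (in_image x) then mop x (f (rep M H P)) else x.

Lemma image_action_in P h : H h -> image_action P (f h) = f (mop h (rep M H P)).
Proof.
  intros Hh; unfold image_action.
  destruct (excluded_middle_informative (in_image (f h))) as [_ | no].
  - symmetry; apply (proj1 f_hom).
  - exfalso; apply no; exists h; auto.
Qed.

Lemma image_action_out P x : ~ in_image x -> image_action P x = x.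
Proof.
  intros nx; unfold image_action.
  destruct (excluded_middle_informative (in_image x)); tauto.
Qed.

Lemma image_action_hom :
  @is_monoid_hom (schutzenberger_group M H) (transformation_monoid N) image_action.
Proof.
  split.
  - intros P Q; apply functional_extensionality; intros x; simpl.
    destruct (classic (in_image x)) as [[h [Hh ->]] | nx].
    + destruct (rep_spec M H P) as [[Pstab _] _].
      rewrite (image_action_in P h Hh), (image_action_in Q _ (Pstab h Hh)),
        (image_action_in _ h Hh), <- (rep_Gmul P Q h Hh), massoc.
      reflexivity.
    + rewrite (image_action_out P x nx), !image_action_out; auto.
  - apply functional_extensionality; intros x; simpl.
    destruct (classic (in_image x)) as [[h [Hh ->]] | nx].
    + rewrite (image_action_in _ h Hh), <- (rep_Gone h Hh), mone_r.
      reflexivity.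
    + apply image_action_out; exact nx.
Qed.

End ImageAction.
End SchutzenbergerRepresentatives.

Theorem mainTheorem1 (M : Monoid) (HM : residually_finite M)
  (H : M -> Prop) (HH : is_H_class H) :
  residually_finite (schutzenberger_group M H).
Proof.
  intros P Q PQ.
  destruct (rep_separates M H P Q PQ) as [h [Hh hPQ]].
  destruct (HM _ _ hPQ) as [N [f [Nfin [f_hom fPQ]]]].
  exists (transformation_monoid N), (image_action M H N f).
  split; [apply finite_transformation_monoid, Nfin |].
  split; [apply image_action_hom, f_hom |].
  intros E; apply fPQ.
  rewrite <- (image_action_in M H N f f_hom P h Hh),
    <- (image_action_in M H N f f_hom Q h Hh).
  exact (f_equal (fun g : N -> N => g (f h)) E).
Qed.
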